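(* Let $\delta'\in(0,1)$, $\rho=(\rho_c,\rho_u,\rho_w)\in(0,\infty)^3$ and $X^{(1)},\dots,X^{(n)}\in\mathcal X$. On the event $\mathcal E_{U,m}(\delta')$, for every $\varphi\in\Omega_\rho$, \[ \sup_{j\in[n]}\big|f(X^{(j)};\varphi)-f_{\mathrm{lin}}(X^{(j)};\varphi)\big|\le\frac1{\sqrt m}\Big(L_{1,m}(\delta')\rho_c\sqrt{\rho_w^2+\rho_u^2}+L_{2,m}(\delta')(\rho_w^2+\rho_u^2)\Big)=:B_{\mathrm{lin},m}(\delta'). \]
   Context: $\mathcal{X}=\{X\in\mathbb{R}^{d\times T}:\max_t\|X_t\|_2\le1\}$ (columns $X_t$); each $X$ has a fixed query $q_X\in\mathbb{R}^d$, $\|q_X\|_2\le1$. Softmax $(\sigma_s(z))_t=e^{z_t}/\sum_se^{z_s}$; $a(X;W)=X\sigma_s(X^\top Wq_X)$; $h(X;\theta)=\sigma(U^\top a(X;W))$, $\theta=(U,\operatorname{vec}(W))$; $f(X;\varphi)=m^{-1/2}\sum_{i=1}^mc_ih(X;\theta_i)$, $\varphi_i=(c_i,U_i,\operatorname{vec}(W_i))$. $\sigma$ twice differentiable with $|\sigma|\le\sigma_0,|\sigma'|\le\sigma_1,|\sigma''|\le\sigma_2$. $m$ even. Symmetric initialization $\varphi^{(0)}$: for $i\le m/2$, independently, $W_i^{(0)}$ with i.i.d. $\mathcal N(0,1)$ entries, $U_i^{(0)}\sim\mathcal N(0,I_d)$, $c_i^{(0)}$ uniform on $\{\pm1\}$;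 $W_{i+m/2}^{(0)}=W_i^{(0)}$, $U_{i+m/2}^{(0)}=U_i^{(0)}$, $c_{i+m/2}^{(0)}=-c_i^{(0)}$. $\Omega_\rho=\{\varphi:|c_i-c_i^{(0)}|\le\rho_c/\sqrt m,\|U_i-U_i^{(0)}\|_2\le\rho_u/\sqrt m,\|W_i-W_i^{(0)}\|_F\le\rho_w/\sqrt m\ \forall i\}$. $f_{\mathrm{lin}}(X;\varphi)=f(X;\varphi^{(0)})+\langle\nabla_\varphi f(X;\varphi^{(0)}),\varphi-\varphi^{(0)}\rangle$. $B_{U,m}(\delta')=\sqrt d+\sqrt{2\log(m/(2\delta'))}+\rho_u/\sqrt m$; $L_{1,m}(\delta')=\sigma_1\sqrt{1+B_{U,m}^2}$; $L_{2,m}(\delta')=\sigma_2(1+B_{U,m}^2)+8\sigma_1\sqrt{1+B_{U,m}^2}$. $\mathcal E_{U,m}(\delta')=\{\max_{i\in[m]}\|U_i^{(0)}\|_2\le\sqrt d+\sqrt{2\log(m/(2\delta'))}\}$. *)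

From HB Require Import structures.
From mathcomp Require Import all_boot all_order all_algebra.
From mathcomp Require Import all_classical all_reals all_analysis.
Set Implicit Arguments. Unset Strict Implicit. Unset Printing Implicit Defensive.
Import Order.TTheory GRing.Theory Num.Theory.
Import numFieldNormedType.Exports.
Local Open Scope ring_scope.

Section Defs.
Variable R : realType.

Definition vnorm (d : nat) (v : 'cV[R]_d) : R := Num.sqrt (\sum_i (v i 0) ^+ 2).

Definition fnorm (p q : nat) (A : 'M[R]_(p, q)) : R :=
  Num.sqrt (\sum_i \sum_j (A i j) ^+ 2).

Definition inX (d T : nat) (X : 'M[R]_(d, T)) : Prop :=
  forall t : 'I_T, vnorm (col t X) <= 1.

Definition softmax (T : nat) (z : 'cV[R]_T) : 'cV[R]_T :=
  \col_t (expR (z t 0) / \sum_s expR (z s 0)).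

Definition attn (d T : nat) (X : 'M[R]_(d, T)) (q : 'cV[R]_d) (W : 'M[R]_d)
  : 'cV[R]_d := X *m softmax (X^T *m W *m q).

Definition hneur (sigma : R -> R) (d T : nat) (X : 'M[R]_(d, T)) (q : 'cV[R]_d)
  (U : 'cV[R]_d) (W : 'M[R]_d) : R := sigma ((U^T *m attn X q W) 0 0).

Definition fnet (sigma : R -> R) (d T m : nat) (X : 'M[R]_(d, T)) (q : 'cV[R]_d)
  (c : 'I_m -> R) (U : 'I_m -> 'cV[R]_d) (W : 'I_m -> 'M[R]_d) : R :=
  (Num.sqrt m%:R)^-1 * \sum_i c i * hneur sigma X q (U i) (W i).

(* f_lin(X;phi) = f(X;phi0) + <grad_phi f(X;phi0), phi - phi0>, the inner
   product being written as the directional derivative at phi0 in direction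
   phi - phi0. *)
Definition flin (sigma : R -> R) (d T m : nat) (X : 'M[R]_(d, T)) (q : 'cV[R]_d)
  (c0 : 'I_m -> R) (U0 : 'I_m -> 'cV[R]_d) (W0 : 'I_m -> 'M[R]_d)
  (c : 'I_m -> R) (U : 'I_m -> 'cV[R]_d) (W : 'I_m -> 'M[R]_d) : R :=
  fnet sigma X q c0 U0 W0 +
  derive1 (fun t : R => fnet sigma X q
             (fun i => c0 i + t * (c i - c0 i))
             (fun i => U0 i + t *: (U i - U0 i))
             (fun i => W0 i + t *: (W i - W0 i))) 0.

Definition inOmega (d m : nat) (rc ru rw : R)
  (c0 : 'I_m -> R) (U0 : 'I_m -> 'cV[R]_d) (W0 : 'I_m -> 'M[R]_d)
  (c : 'I_m -> R) (U : 'I_m -> 'cV[R]_d) (W : 'I_m -> 'M[R]_d) : Prop :=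
  forall i : 'I_m,
    [/\ `|c i - c0 i| <= rc / Num.sqrt m%:R,
        vnorm (U i - U0 i) <= ru / Num.sqrt m%:R &
        fnorm (W i - W0 i) <= rw / Num.sqrt m%:R].

(* Support of the symmetric initialization: c_i^(0) in {+-1}, and for
   i < m/2 the neuron i + m/2 copies (W,U) of neuron i with c negated. *)
Definition sym_init (d m : nat)
  (c0 : 'I_m -> R) (U0 : 'I_m -> 'cV[R]_d) (W0 : 'I_m -> 'M[R]_d) : Prop :=
  (forall i : 'I_m, c0 i = 1 \/ c0 i = -1) /\
  (forall i j : 'I_m, (i < m./2)%N -> nat_of_ord j = (i + m./2)%N ->
     [/\ W0 j = W0 i, U0 j = U0 i & c0 j = - c0 i]).

Definition BUm (d m : nat) (delta ru : R) : R :=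
  Num.sqrt d%:R + Num.sqrt (2 * ln (m%:R / (2 * delta))) + ru / Num.sqrt m%:R.

Definition L1m (s1 : R) (d m : nat) (delta ru : R) : R :=
  s1 * Num.sqrt (1 + BUm d m delta ru ^+ 2).

Definition L2m (s1 s2 : R) (d m : nat) (delta ru : R) : R :=
  s2 * (1 + BUm d m delta ru ^+ 2) + 8 * s1 * Num.sqrt (1 + BUm d m delta ru ^+ 2).

Definition eventU (d m : nat) (delta : R) (U0 : 'I_m -> 'cV[R]_d) : Prop :=
  forall i : 'I_m,
    vnorm (U0 i) <= Num.sqrt d%:R + Num.sqrt (2 * ln (m%:R / (2 * delta))).

End Defs.

From HB Require Import structures.
From mathcomp Require Import all_boot all_order all_algebra.
From mathcomp Require Import all_classical all_reals all_analysis.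
From mathcomp Require Import ring lra.
Set Implicit Arguments. Unset Strict Implicit. Unset Printing Implicit Defensive.
Import Order.TTheory GRing.Theory Num.Theory.
Import numFieldNormedType.Exports.
Local Open Scope ring_scope.

(* Along the segment [t |-> phi0 + t (phi - phi0)] the network is
   [F t = m^-1/2 * \sum_i (c0_i + t dc_i) sigma (P_i t)], and [f - f_lin] is the
   remainder [F 1 - F 0 - F'(0)].  Each pre-activation
   [P_i t = \sum_s w_s(t) (alpha_s + t beta_s)] is an average under the softmax
   weights [w(t) = softmax (a + t b)]; differentiating such an average produces a
   covariance with [b], which Cauchy-Schwarz bounds by the product of sup norms.
   Hence [|P_i'| <= |dU_i| + B |dW_i|] and [|P_i''| <= 2 |dU_i| |dW_i| + 3 B |dW_i|^2],
   where [B = B_{U,m}] bounds [|alpha_s + t beta_s|] on the event [E_{U,m}].  The mean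
   value theorem for the [dc_i] term and a second-order Taylor bound for the [c0_i]
   term ([|c0_i| = 1]) make each neuron contribute [O(1/m)], and the [m] neurons
   together with the prefactor [m^-1/2] give the claim. *)

Section RealCalculus.
Variable R : realType.
Local Open Scope classical_set_scope.

Lemma scaleRE (k x : R) : k *: x = k * x. Proof. by []. Qed.

Lemma mvt_norm_le (f df : R -> R) (a b K : R) : a <= b ->
  (forall x, is_derive x (1:R) f (df x)) -> (forall x, a <= x <= b -> `|df x| <= K) ->
  `|f b - f a| <= K * (b - a).
Proof.
move=> leab fdf dfK.
have cont : {within `[a, b], continuous f}.
  apply/continuous_subspaceT => x.
  by apply/differentiable_continuous/derivable1_diffP; case: (fdf x).
have [c cab ->] := MVT_segment leab (fun x _ => fdf x) cont.
rewrite normrM (ger0_norm (x := b - a)) ?subr_ge0 //.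
by apply: ler_wpM2r; rewrite ?subr_ge0 // dfK //; move: cab; rewrite in_itv.
Qed.

(* with [K] in place of the sharp [K / 2], which suffices here *)
Lemma taylor2_norm_le (f df ddf : R -> R) (K : R) :
  (forall x, is_derive x (1:R) f (df x)) -> (forall x, is_derive x (1:R) df (ddf x)) ->
  (forall x, 0 <= x <= 1 -> `|ddf x| <= K) ->
  `|f 1 - f 0 - df 0| <= K.
Proof.
move=> fdf dfddf ddfK.
have remainder x : is_derive x (1:R) (fun y => f y - y * df 0) (df x - df 0).
  have fx := fdf x.
  by apply: is_derive_eq; rewrite scaler0 add0r [_%:A]mulr1.
have := mvt_norm_le (K := K) ler01 remainder.
rewrite subr0 mulr1 mul0r subr0 mul1r addrAC; apply => x /andP[x0 x1].
apply: le_trans (mvt_norm_le (K := K) x0 dfddf _) _.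
  by move=> y /andP[y0 yx]; rewrite ddfK // y0 (le_trans yx x1).
by rewrite subr0 ler_piMr // (le_trans _ (ddfK 0 _)) ?lexx ?ler01.
Qed.

Lemma is_derive_bigsum (I : finType) (h : I -> R -> R) (dh : I -> R) (x : R) :
  (forall i, is_derive x (1:R) (h i) (dh i)) -> is_derive x (1:R) (\sum_i h i) (\sum_i dh i).
Proof.
by move=> hdh; elim/big_ind2: _ => // *; [exact: is_derive_cst | exact: is_deriveD].
Qed.

End RealCalculus.

Lemma cauchy_schwarz_sqr (R : realFieldType) (I : finType) (x y : I -> R) :
  (\sum_i x i * y i) ^+ 2 <= (\sum_i x i ^+ 2) * (\sum_i y i ^+ 2).
Proof.
set S := \sum_i x i * y i; set A := \sum_i x i ^+ 2; set B := \sum_i y i ^+ 2.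
have B0 : 0 <= B by rewrite sumr_ge0 // => i _; rewrite sqr_ge0.
have [B_eq0 | B_neq0] := eqVneq B 0.
  have y0 i : y i = 0.
    by apply/eqP; rewrite -sqrf_eq0; apply/eqP/(psumr_eq0P _ B_eq0) => // j _; rewrite sqr_ge0.
  by rewrite /S big1 ?expr0n ?mulr_ge0 ?sumr_ge0 // => i _; rewrite ?y0 ?mulr0 ?sqr_ge0.
have B_gt0 : 0 < B by rewrite lt_def B_neq0.
have : 0 <= \sum_i (B * x i - S * y i) ^+ 2 by rewrite sumr_ge0 // => i _; rewrite sqr_ge0.
have -> : \sum_i (B * x i - S * y i) ^+ 2 = B * (B * A - S ^+ 2).
  transitivity (\sum_i (B ^+ 2 * x i ^+ 2 - (2 * B * S) * (x i * y i) + S ^+ 2 * y i ^+ 2)).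
    by apply: eq_bigr => i _; ring.
  rewrite big_split sumrB /= -!mulr_sumr -/A -/B -/S; ring.
by rewrite pmulr_rge0 // subr_ge0 mulrC.
Qed.

Lemma cauchy_schwarz (R : rcfType) (I : finType) (x y : I -> R) :
  `|\sum_i x i * y i| <= Num.sqrt (\sum_i x i ^+ 2) * Num.sqrt (\sum_i y i ^+ 2).
Proof.
have sum_sqr_ge0 (z : I -> R) : 0 <= \sum_i z i ^+ 2 by rewrite sumr_ge0 // => i _; rewrite sqr_ge0.
by rewrite -sqrtr_sqr -sqrtrM // ler_sqrt ?mulr_ge0 // cauchy_schwarz_sqr.
Qed.

Section GibbsMean.
Variables (R : realType) (I : finType) (a b : I -> R).

Definition gibbs_sum (f : I -> R) (t : R) : R := \sum_s f s * expR (a s + t * b s).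
Definition gibbs_mean (f : I -> R) (t : R) : R := gibbs_sum f t / gibbs_sum (fun=> 1) t.
Definition gibbs_weight (s : I) (t : R) : R := expR (a s + t * b s) / gibbs_sum (fun=> 1) t.
Definition gibbs_cov (f : I -> R) (t : R) : R :=
  gibbs_mean (fun s => f s * b s) t - gibbs_mean f t * gibbs_mean b t.

Lemma gibbs_meanE f t : gibbs_mean f t = \sum_s gibbs_weight s t * f s.
Proof.
rewrite /gibbs_mean /gibbs_sum mulr_suml.
by apply: eq_bigr => s _; rewrite /gibbs_weight; ring.
Qed.

Lemma gibbs_weight_ge0 s t : 0 <= gibbs_weight s t.
Proof. by rewrite divr_ge0 ?expR_ge0 // sumr_ge0 // => r _; rewrite mul1r expR_ge0. Qed.

Lemma gibbs_sum1_gt0 (s0 : I) t : 0 < gibbs_sum (fun=> 1) t.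
Proof.
rewrite /gibbs_sum (bigD1 s0) //= mul1r ltr_pwDl ?expR_gt0 //.
by rewrite sumr_ge0 // => s _; rewrite mul1r expR_ge0.
Qed.

Lemma sum_gibbs_weight_le1 t : \sum_s gibbs_weight s t <= 1.
Proof.
have [s0 _ | I0] := pickP (@predT I); last by rewrite big_pred0.
rewrite -mulr_suml (eq_bigr (fun s => 1 * expR (a s + t * b s))) => [|s _]; last by rewrite mul1r.
by rewrite divff // gt_eqF // (gibbs_sum1_gt0 s0).
Qed.

Lemma norm_gibbs_mean_le f K t : 0 <= K -> (forall s, `|f s| <= K) -> `|gibbs_mean f t| <= K.
Proof.
move=> K0 fK; rewrite gibbs_meanE; apply: le_trans (ler_norm_sum _ _ _) _.
apply: le_trans (_ : \sum_s gibbs_weight s t * K <= K).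
  apply: ler_sum => s _; rewrite normrM ger0_norm ?gibbs_weight_ge0 //.
  by rewrite ler_wpM2l ?gibbs_weight_ge0.
by rewrite -mulr_suml ler_piMl ?sum_gibbs_weight_le1.
Qed.

Lemma gibbs_mean_sqr_le f L t : 0 <= L -> (forall s, `|f s| <= L) ->
  gibbs_mean (fun s => f s ^+ 2) t <= L ^+ 2.
Proof.
move=> L0 fL; rewrite (le_trans (ler_norm _)) // norm_gibbs_mean_le ?sqr_ge0 // => s.
by rewrite normrX lerXn2r ?nnegrE.
Qed.

Lemma gibbs_mean_lin f g k t :
  gibbs_mean (fun s => f s + k * g s) t = gibbs_mean f t + k * gibbs_mean g t.
Proof. by rewrite !gibbs_meanE mulr_sumr -big_split; apply: eq_bigr => s _ /=; ring. Qed.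

Lemma eq_gibbs_mean f g t : f =1 g -> gibbs_mean f t = gibbs_mean g t.
Proof. by move=> fg; rewrite !gibbs_meanE; apply: eq_bigr => s _; rewrite fg. Qed.

Lemma is_derive_gibbs_sum f t :
  is_derive t (1:R) (gibbs_sum f) (gibbs_sum (fun s => f s * b s) t).
Proof.
have -> : gibbs_sum f = \sum_s (fun t => f s * expR (a s + t * b s)).
  by apply/funext => x; rewrite fct_sumE.
apply: is_derive_bigsum => s; apply: is_derive_eq.
by rewrite scaler0 !add0r [_%:A]mulr1 !scaleRE; ring.
Qed.

Lemma is_derive_gibbs_mean f t : is_derive t (1:R) (gibbs_mean f) (gibbs_cov f t).
Proof.
have [s0 _ | I0] := pickP (@predT I); last first.
  have gibbs_sum0 g x : gibbs_sum g x = 0 by rewrite /gibbs_sum big_pred0.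
  have -> : gibbs_mean f = cst 0 by apply/funext => x; rewrite /gibbs_mean gibbs_sum0 mul0r.
  rewrite /gibbs_cov /gibbs_mean !gibbs_sum0 !mul0r subr0; exact: is_derive_cst.
have Z_neq0 : gibbs_sum (fun=> 1) t != 0 by rewrite gt_eqF // (gibbs_sum1_gt0 s0).
have dN := is_derive_gibbs_sum f t.
have dV := is_deriveV Z_neq0 (is_derive_gibbs_sum (fun=> 1) t).
apply: is_derive_eq.
have -> : gibbs_sum (fun s => 1 * b s) t = gibbs_sum b t.
  by apply: eq_bigr => s _; rewrite mul1r.
by rewrite /gibbs_cov /gibbs_mean !scaleRE; field.
Qed.

Lemma gibbs_cov_lin f g k t :
  gibbs_cov (fun s => f s + k * g s) t = gibbs_cov f t + k * gibbs_cov g t.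
Proof.
rewrite /gibbs_cov gibbs_mean_lin.
rewrite (@eq_gibbs_mean _ (fun s => f s * b s + k * (g s * b s))) => [|s]; last by ring.
by rewrite gibbs_mean_lin; ring.
Qed.

Lemma eq_gibbs_cov f g t : f =1 g -> gibbs_cov f t = gibbs_cov g t.
Proof.
move=> fg; rewrite /gibbs_cov (eq_gibbs_mean _ fg).
by rewrite (@eq_gibbs_mean (fun s => f s * b s) (fun s => g s * b s)) // => s; rewrite fg.
Qed.

Lemma norm_gibbs_cov_le f K M t : 0 <= K -> 0 <= M ->
  (forall s, `|f s| <= K) -> (forall s, `|b s| <= M) -> `|gibbs_cov f t| <= K * M.
Proof.
move=> K0 M0 fK bM.
pose mu := gibbs_mean b t; pose sw s := Num.sqrt (gibbs_weight s t).
have sw2 s : sw s ^+ 2 = gibbs_weight s t by rewrite sqr_sqrtr ?gibbs_weight_ge0.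
have -> : gibbs_cov f t = \sum_s (sw s * f s) * (sw s * (b s - mu)).
  rewrite /gibbs_cov -/mu !gibbs_meanE mulr_suml -sumrB; apply: eq_bigr => s _.
  by rewrite [RHS]mulrACA -expr2 sw2; ring.
apply: le_trans (cauchy_schwarz _ _) _.
apply: ler_pM; rewrite ?sqrtr_ge0 //.
  rewrite -(ger0_norm K0) -sqrtr_sqr ler_sqrt ?sqr_ge0 //.
  by under eq_bigr do rewrite exprMn sw2; rewrite -gibbs_meanE gibbs_mean_sqr_le.
(* the weights sum to 1, or to 0 if [I] is empty *)
have -> : \sum_s (sw s * (b s - mu)) ^+ 2
    = gibbs_mean (fun s => b s ^+ 2) t - mu ^+ 2 * (2 - \sum_s gibbs_weight s t).
  transitivity (\sum_s (gibbs_weight s t * b s ^+ 2 - (2 * mu) * (gibbs_weight s t * b s)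
      + mu ^+ 2 * gibbs_weight s t)).
    by apply: eq_bigr => s _; rewrite exprMn sw2; ring.
  rewrite big_split sumrB /= -!mulr_sumr -!gibbs_meanE -/mu; ring.
rewrite -(ger0_norm M0) -sqrtr_sqr ler_sqrt ?sqr_ge0 // lerBlDr.
rewrite (le_trans (gibbs_mean_sqr_le t M0 bM)) // lerDl mulr_ge0 ?sqr_ge0 //.
by rewrite subr_ge0 (le_trans (sum_gibbs_weight_le1 t)) ?ler1n.
Qed.

Definition gibbs_cov' f t := gibbs_cov (fun s => f s * b s) t
  - (gibbs_cov f t * gibbs_mean b t + gibbs_mean f t * gibbs_cov b t).

Lemma is_derive_gibbs_cov f t : is_derive t (1:R) (gibbs_cov f) (gibbs_cov' f t).
Proof.
have -> : gibbs_cov f = gibbs_mean (fun s => f s * b s) - gibbs_mean f * gibbs_mean b.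
  by apply/funext.
have d1 := is_derive_gibbs_mean (fun s => f s * b s) t.
have d2 := is_derive_gibbs_mean f t.
have d3 := is_derive_gibbs_mean b t.
by apply: is_derive_eq; rewrite /gibbs_cov' !scaleRE; ring.
Qed.

Lemma gibbs_cov'_lin f g k t :
  gibbs_cov' (fun s => f s + k * g s) t = gibbs_cov' f t + k * gibbs_cov' g t.
Proof.
rewrite /gibbs_cov' !gibbs_cov_lin gibbs_mean_lin.
rewrite (@eq_gibbs_cov _ (fun s => f s * b s + k * (g s * b s))) => [|s]; last by ring.
by rewrite gibbs_cov_lin; ring.
Qed.

End GibbsMean.

Section Preactivation.
Variables (R : realType) (I : finType) (a b al be : I -> R).

Definition preact t := gibbs_mean a b al t + t * gibbs_mean a b be t.
Definition preact' t := gibbs_mean a b be t + gibbs_cov a b al t + t * gibbs_cov a b be t.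
Definition preact'' t :=
  2 * gibbs_cov a b be t + gibbs_cov' a b al t + t * gibbs_cov' a b be t.

Lemma is_derive_preact t : is_derive t (1:R) preact (preact' t).
Proof.
have -> : preact = gibbs_mean a b al + id * gibbs_mean a b be by apply/funext.
have d1 := is_derive_gibbs_mean a b al t; have d2 := is_derive_gibbs_mean a b be t.
apply: is_derive_eq (is_deriveD d1 (is_deriveM (is_derive_id t 1) d2)) _.
by rewrite /preact' !scaleRE; ring.
Qed.

Lemma is_derive_preact' t : is_derive t (1:R) preact' (preact'' t).
Proof.
have -> : preact' = gibbs_mean a b be + gibbs_cov a b al + id * gibbs_cov a b be.
  by apply/funext.
have d1 := is_derive_gibbs_mean a b be t.
have d2 := is_derive_gibbs_cov a b al t; have d3 := is_derive_gibbs_cov a b be t.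
apply: is_derive_eq (is_deriveD (is_deriveD d1 d2) (is_deriveM (is_derive_id t 1) d3)) _.
by rewrite /preact'' /gibbs_cov !scaleRE; ring.
Qed.

Variables (u M B t : R).
Hypotheses (u_ge0 : 0 <= u) (M_ge0 : 0 <= M) (B_ge0 : 0 <= B).
Hypotheses (be_u : forall s, `|be s| <= u) (b_M : forall s, `|b s| <= M).
Hypothesis seg_B : forall s, `|al s + t * be s| <= B.

Lemma norm_preact'_le : `|preact' t| <= u + B * M.
Proof.
have -> : preact' t = gibbs_mean a b be t + gibbs_cov a b (fun s => al s + t * be s) t.
  by rewrite gibbs_cov_lin /preact'; ring.
by rewrite (le_trans (ler_normD _ _)) // lerD ?norm_gibbs_mean_le ?norm_gibbs_cov_le.
Qed.

Lemma norm_preact''_le : `|preact'' t| <= 2 * u * M + 3 * B * M ^+ 2.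
Proof.
have -> : preact'' t = 2 * gibbs_cov a b be t + gibbs_cov' a b (fun s => al s + t * be s) t.
  by rewrite gibbs_cov'_lin /preact''; ring.
have cov_BM (f : I -> R) K : 0 <= K -> (forall s, `|f s| <= K) -> `|gibbs_cov a b f t| <= K * M.
  by move=> K0 fK; rewrite norm_gibbs_cov_le.
rewrite (_ : 3 * B * M ^+ 2 = B * M * M + (B * M * M + B * (M * M))); last by ring.
apply: le_trans (ler_normD _ _) _; apply: lerD.
  by rewrite normrM ger0_norm // -mulrA ler_pM2l // cov_BM.
apply: le_trans (ler_normB _ _) _; apply: lerD.
  by rewrite cov_BM ?mulr_ge0 // => s; rewrite normrM ler_pM.
apply: le_trans (ler_normD _ _) _.
by apply: lerD; rewrite normrM; apply: ler_pM; rewrite ?normr_ge0 ?norm_gibbs_mean_le // cov_BM.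
Qed.

End Preactivation.

Lemma cauchy_schwarz2 (R : rcfType) (u B M : R) :
  u + B * M <= Num.sqrt (1 + B ^+ 2) * Num.sqrt (u ^+ 2 + M ^+ 2).
Proof.
rewrite -sqrtrM ?addr_ge0 ?sqr_ge0 // (le_trans (ler_norm _)) // -sqrtr_sqr.
by rewrite ler_sqrt ?mulr_ge0 ?addr_ge0 ?sqr_ge0 //; have := sqr_ge0 (u * B - M); nra.
Qed.

Section Neuron.
Variables (R : realType) (sigma : R -> R) (s1 s2 : R).
Hypotheses (sigma_d1 : forall x, derivable sigma x 1)
  (sigma_d2 : forall x, derivable (derive1 sigma) x 1).
Hypotheses (sigma1_s1 : forall x, `|derive1 sigma x| <= s1)
  (sigma2_s2 : forall x, `|derive1 (derive1 sigma) x| <= s2).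

Variables (I : finType) (a b al be : I -> R) (u M B : R).
Hypotheses (u_ge0 : 0 <= u) (M_ge0 : 0 <= M) (B_ge0 : 0 <= B).
Hypotheses (be_u : forall s, `|be s| <= u) (b_M : forall s, `|b s| <= M).
Hypothesis seg_B : forall t, 0 <= t <= 1 -> forall s, `|al s + t * be s| <= B.

Local Notation P := (preact a b al be).
Local Notation P' := (preact' a b al be).
Local Notation P'' := (preact'' a b al be).

Lemma is_derive_sigma_preact t :
  is_derive t (1:R) (sigma \o P) (derive1 sigma (P t) * P' t).
Proof.
apply: is_derive1_comp (is_derive_preact a b al be t).
by rewrite derive1E; apply: derivableP.
Qed.

Lemma is_derive_sigma'_preact t :
  is_derive t (1:R) (fun t => derive1 sigma (P t) * P' t)
    (derive1 (derive1 sigma) (P t) * P' t * P' t + derive1 sigma (P t) * P'' t).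
Proof.
have d1 : is_derive (P t) (1:R) (derive1 sigma) (derive1 (derive1 sigma) (P t)).
  by rewrite [X in is_derive _ _ _ X]derive1E; apply: derivableP.
apply: is_derive_eq (is_deriveM (is_derive1_comp d1 (is_derive_preact a b al be t))
  (is_derive_preact' a b al be t)) _.
by rewrite !scaleRE /=; ring.
Qed.

Lemma sigma_preact_sub_le : `|sigma (P 1) - sigma (P 0)| <= s1 * (u + B * M).
Proof.
have := mvt_norm_le (K := s1 * (u + B * M)) ler01 is_derive_sigma_preact.
rewrite subr0 mulr1; apply => x x01.
rewrite normrM; apply: ler_pM; rewrite ?normr_ge0 //.
exact: norm_preact'_le (seg_B x01).
Qed.

Lemma sigma_preact_taylor_le :
  `|sigma (P 1) - sigma (P 0) - derive1 sigma (P 0) * P' 0|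
    <= s2 * (u + B * M) ^+ 2 + s1 * (2 * u * M + 3 * B * M ^+ 2).
Proof.
apply: taylor2_norm_le is_derive_sigma_preact is_derive_sigma'_preact _ => x x01.
have P'_le : `|P' x| <= u + B * M by exact: norm_preact'_le (seg_B x01).
have P''_le : `|P'' x| <= 2 * u * M + 3 * B * M ^+ 2.
  exact: norm_preact''_le (seg_B x01).
rewrite (le_trans (ler_normD _ _)) // expr2 mulrA.
by apply: lerD; rewrite !normrM; apply: ler_pM; rewrite ?mulr_ge0 //; apply: ler_pM.
Qed.

Lemma neuron_error_le (c0 dc r1 r2 : R) :
  `|c0| = 1 -> `|dc| <= r1 -> Num.sqrt (u ^+ 2 + M ^+ 2) <= r2 ->
  `|dc * (sigma (P 1) - sigma (P 0))
    + c0 * (sigma (P 1) - sigma (P 0) - derive1 sigma (P 0) * P' 0)|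
  <= s1 * Num.sqrt (1 + B ^+ 2) * r1 * r2
     + (s2 * (1 + B ^+ 2) + 8 * s1 * Num.sqrt (1 + B ^+ 2)) * r2 ^+ 2.
Proof.
move=> c0_1 dc_r1 N_r2.
set S := Num.sqrt (1 + B ^+ 2); set N := Num.sqrt (u ^+ 2 + M ^+ 2).
have s1_ge0 : 0 <= s1 := le_trans (normr_ge0 _) (sigma1_s1 0).
have s2_ge0 : 0 <= s2 := le_trans (normr_ge0 _) (sigma2_s2 0).
have r1_ge0 : 0 <= r1 := le_trans (normr_ge0 _) dc_r1.
have N_ge0 : 0 <= N := sqrtr_ge0 _.
have r2_ge0 : 0 <= r2 := le_trans N_ge0 N_r2.
have S2 : S ^+ 2 = 1 + B ^+ 2 by rewrite sqr_sqrtr // addr_ge0 ?sqr_ge0.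
have N2 : N ^+ 2 = u ^+ 2 + M ^+ 2 by rewrite sqr_sqrtr // addr_ge0 ?sqr_ge0.
have S_ge1 : 1 <= S by rewrite -sqrtr1 ler_sqrt ?addr_ge0 ?sqr_ge0 // lerDl sqr_ge0.
have B_S : B <= S.
  by rewrite -(ger0_norm B_ge0) -sqrtr_sqr ler_sqrt ?addr_ge0 ?sqr_ge0 // lerDr.
have P'0_ge0 : 0 <= u + B * M by rewrite addr_ge0 ?mulr_ge0.
have P'0_le : u + B * M <= S * r2 by rewrite (le_trans (cauchy_schwarz2 u B M)) ?ler_wpM2l.
have N2_r2 : N ^+ 2 <= r2 ^+ 2 by rewrite lerXn2r ?nnegrE.
have P''_le : 2 * u * M + 3 * B * M ^+ 2 <= 8 * S * r2 ^+ 2.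
  have uM : 2 * u * M <= N ^+ 2 by rewrite N2; have := sqr_ge0 (u - M); nra.
  have BM2 : B * M ^+ 2 <= S * N ^+ 2.
    by rewrite ler_pM ?sqr_ge0 // N2 lerDr sqr_ge0.
  have SN2 : S * N ^+ 2 <= S * r2 ^+ 2 by rewrite ler_wpM2l ?(le_trans ler01).
  have r2S : r2 ^+ 2 <= S * r2 ^+ 2 by rewrite ler_peMl ?sqr_ge0.
  have : 0 <= r2 ^+ 2 := sqr_ge0 _.
  lra.
rewrite (le_trans (ler_normD _ _)) // !normrM c0_1 mul1r.
apply: le_trans (lerD (ler_pM _ _ dc_r1 sigma_preact_sub_le) sigma_preact_taylor_le) _;
  rewrite ?normr_ge0 ?mulr_ge0 //.
have h1 := ler_wpM2l (mulr_ge0 s1_ge0 r1_ge0) P'0_le.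
have h2 : s2 * (u + B * M) ^+ 2 <= s2 * (1 + B ^+ 2) * r2 ^+ 2.
  rewrite -S2 -mulrA -exprMn; apply: ler_wpM2l => //.
  by rewrite lerXn2r ?nnegrE ?mulr_ge0 ?sqrtr_ge0.
have h3 := ler_wpM2l s1_ge0 P''_le.
lra.
Qed.

End Neuron.

Lemma sqrt_sumsq_le_div (R : rcfType) (x y a b k : R) : 0 < k -> 0 <= x -> 0 <= y ->
  x <= a / k -> y <= b / k -> Num.sqrt (x ^+ 2 + y ^+ 2) <= Num.sqrt (a ^+ 2 + b ^+ 2) / k.
Proof.
move=> k_gt0 x_ge0 y_ge0; rewrite !ler_pdivlMr // => xa yb.
rewrite -(ger0_norm (ltW k_gt0)) -sqrtr_sqr -sqrtrM ?addr_ge0 ?sqr_ge0 //.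
rewrite ler_sqrt ?addr_ge0 ?sqr_ge0 // mulrDl -!exprMn.
by apply: lerD; rewrite !expr2; apply: ler_pM => //; rewrite mulr_ge0 // ltW.
Qed.

Section Attention.
Variables (R : realType) (d T : nat) (X : 'M[R]_(d, T)) (q : 'cV[R]_d).

Definition attn_logit (W : 'M[R]_d) (s : 'I_T) : R := (X^T *m W *m q) s 0.
Definition readout (U : 'cV[R]_d) (s : 'I_T) : R := (U^T *m X) 0 s.

Lemma hneur_segment (sigma : R -> R) U0 dU W0 dW t :
  hneur sigma X q (U0 + t *: dU) (W0 + t *: dW)
  = sigma (preact (attn_logit W0) (attn_logit dW) (readout U0) (readout dU) t).
Proof.
have logitE r : (X^T *m (W0 + t *: dW) *m q) r 0 = attn_logit W0 r + t * attn_logit dW r.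
  have -> : X^T *m (W0 + t *: dW) *m q = X^T *m W0 *m q + t *: (X^T *m dW *m q).
    by rewrite mulmxDr mulmxDl -scalemxAr -scalemxAl.
  by rewrite [LHS]mxE [X in _ + X = _]mxE.
have readoutE r : ((U0 + t *: dU)^T *m X) 0 r = readout U0 r + t * readout dU r.
  have -> : (U0 + t *: dU)^T *m X = U0^T *m X + t *: (dU^T *m X).
    by rewrite linearD /= linearZ /= mulmxDl -scalemxAl.
  by rewrite [LHS]mxE [X in _ + X = _]mxE.
rewrite /hneur /attn /preact -gibbs_mean_lin gibbs_meanE mulmxA; congr sigma.
rewrite mxE; apply: eq_bigr => s _.
rewrite readoutE mulrC /softmax mxE logitE /gibbs_weight /gibbs_sum; congr (_ / _ * _).
by apply: eq_bigr => r _; rewrite mul1r logitE.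
Qed.

Hypothesis X_in : inX X.

Lemma norm_readout_le U s : `|readout U s| <= vnorm U.
Proof.
rewrite /readout mxE (eq_bigr (fun j => U j 0 * col s X j 0)) => [|j _]; last by rewrite !mxE.
by rewrite (le_trans (cauchy_schwarz _ _)) // ler_piMr ?sqrtr_ge0 ?X_in.
Qed.

Lemma norm_readout_segment_le U0 dU t s : 0 <= t <= 1 ->
  `|readout U0 s + t * readout dU s| <= vnorm U0 + vnorm dU.
Proof.
case/andP=> t_ge0 t_le1; apply: le_trans (ler_normD _ _) _.
apply: lerD; rewrite ?norm_readout_le // normrM ger0_norm //.
by rewrite (le_trans _ (norm_readout_le dU s)) // ler_piMl.
Qed.

Lemma norm_attn_logit_le W s : vnorm q <= 1 -> `|attn_logit W s| <= fnorm W.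
Proof.
move=> q_le1.
have -> : attn_logit W s = \sum_k \sum_l W k l * (X k s * q l 0).
  rewrite /attn_logit mxE; under eq_bigr => l _ do rewrite mxE big_distrl /=.
  rewrite exchange_big; apply: eq_bigr => k _; apply: eq_bigr => l _.
  by rewrite !mxE; ring.
rewrite pair_bigA /= (le_trans (cauchy_schwarz _ _)) // /fnorm pair_bigA /=.
rewrite ler_piMr ?sqrtr_ge0 //.
rewrite -(pair_bigA _ (fun k l => (X k s * q l 0) ^+ 2)) /=.
have -> : \sum_k \sum_l (X k s * q l 0) ^+ 2 = (\sum_k col s X k 0 ^+ 2) * \sum_l q l 0 ^+ 2.
  rewrite big_distrl /=; apply: eq_bigr => k _.
  by rewrite big_distrr /=; apply: eq_bigr => l _; rewrite !mxE exprMn.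
by rewrite sqrtrM ?sumr_ge0 // => [|k _]; rewrite ?mulr_ile1 ?sqrtr_ge0 ?X_in ?sqr_ge0.
Qed.

End Attention.

Lemma linearization_error_sum (R : realType) (I : finType) (k : R) (c0 dc : I -> R)
    (h : I -> R -> R) (dh : I -> R) :
  (forall i, is_derive 0 (1:R) (h i) (dh i)) ->
  let F t := k * \sum_i (c0 i + t * dc i) * h i t in
  F 1 - (F 0 + derive1 F 0) =
  k * \sum_i (dc i * (h i 1 - h i 0) + c0 i * (h i 1 - h i 0 - dh i)).
Proof.
move=> h_dh F.
have d_term i :
    is_derive 0 (1:R) (fun t => (c0 i + t * dc i) * h i t) (dc i * h i 0 + c0 i * dh i).
  have d_lin : is_derive (0:R) (1:R) (fun t => c0 i + t * dc i) (dc i).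
    apply: is_derive_eq (is_deriveD (is_derive_cst (c0 i) _ _)
      (is_deriveM (is_derive_id _ _) (is_derive_cst (dc i) _ _))) _.
    by rewrite scaler0 !add0r [_%:A]mulr1.
  apply: is_derive_eq (is_deriveM d_lin (h_dh i)) _.
  by rewrite !scaleRE mul0r addr0; ring.
have d_F : is_derive 0 (1:R) F (k * \sum_i (dc i * h i 0 + c0 i * dh i)).
  have -> : F = cst k * \sum_i (fun t => (c0 i + t * dc i) * h i t).
    by apply/funext => t; rewrite /F fct_sumE.
  apply: is_derive_eq (is_deriveM (is_derive_cst k _ _) (is_derive_bigsum d_term)) _.
  by rewrite scaler0 addr0 scaleRE.
rewrite derive1E derive_val /F -mulrDr -mulrBr; congr (_ * _).
by rewrite -big_split -sumrB; apply: eq_bigr => i _ /=; ring.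
Qed.

Section Network.
Variables (R : realType) (sigma : R -> R) (d T m : nat) (X : 'M[R]_(d, T)) (q : 'cV[R]_d).
Variables (c0 c : 'I_m -> R) (U0 U : 'I_m -> 'cV[R]_d) (W0 W : 'I_m -> 'M[R]_d).

Definition fnet_segment (t : R) : R :=
  fnet sigma X q (fun i => c0 i + t * (c i - c0 i))
    (fun i => U0 i + t *: (U i - U0 i)) (fun i => W0 i + t *: (W i - W0 i)).

Local Notation P i := (preact (attn_logit X q (W0 i)) (attn_logit X q (W i - W0 i))
  (readout X (U0 i)) (readout X (U i - U0 i))).
Local Notation P' i := (preact' (attn_logit X q (W0 i)) (attn_logit X q (W i - W0 i))
  (readout X (U0 i)) (readout X (U i - U0 i))).

Lemma fnet_segmentE t : fnet_segment t =
  (Num.sqrt m%:R)^-1 * \sum_i (c0 i + t * (c i - c0 i)) * sigma (P i t).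
Proof.
by rewrite /fnet_segment /fnet; congr (_ * _); apply: eq_bigr => i _; rewrite hneur_segment.
Qed.

Hypothesis sigma_d1 : forall x, derivable sigma x 1.

Lemma fnet_sub_flinE :
  fnet sigma X q c U W - flin sigma X q c0 U0 W0 c U W =
  (Num.sqrt m%:R)^-1 * \sum_i ((c i - c0 i) * (sigma (P i 1) - sigma (P i 0))
    + c0 i * (sigma (P i 1) - sigma (P i 0) - derive1 sigma (P i 0) * P' i 0)).
Proof.
have -> : fnet sigma X q c U W = fnet_segment 1.
  by rewrite /fnet_segment; congr fnet; apply/funext => i; rewrite ?mul1r ?scale1r addrC subrK.
have -> : flin sigma X q c0 U0 W0 c U W = fnet_segment 0 + derive1 fnet_segment 0.
  by rewrite /fnet_segment; congr (fnet _ _ _ _ _ _ + _); apply/funext => i;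
    rewrite ?mul0r ?scale0r addr0.
rewrite (funext fnet_segmentE).
exact: (linearization_error_sum (h := fun i t => sigma (P i t)) _ c0 (fun i => c i - c0 i)
  (fun i => is_derive_sigma_preact sigma_d1 _ _ _ _ 0)).
Qed.

End Network.

Lemma norm_scaled_sum_le (R : realFieldType) (m : nat) (k Z : R) (F : 'I_m -> R) :
  (0 < m)%N -> 0 <= k -> (forall i, `|F i| <= Z / m%:R) -> `|k * \sum_i F i| <= k * Z.
Proof.
move=> m_gt0 k_ge0 F_le; rewrite normrM ger0_norm // ler_wpM2l //.
rewrite (le_trans (ler_norm_sum _ _ _)) // (le_trans (ler_sum _ (fun i _ => F_le i))) //.
by rewrite sumr_const card_ord -[leLHS]mulr_natr divfK // pnatr_eq0 -lt0n.
Qed.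

Theorem lemma3 (R : realType) (sigma : R -> R) (s0 s1 s2 : R)
  (Hd1 : forall x : R, derivable sigma x 1)
  (Hd2 : forall x : R, derivable (derive1 sigma) x 1)
  (Hs0 : forall x : R, `|sigma x| <= s0)
  (Hs1 : forall x : R, `|derive1 sigma x| <= s1)
  (Hs2 : forall x : R, `|derive1 (derive1 sigma) x| <= s2)
  (d T m n : nat) (Hm : ~~ odd m)
  (delta rc ru rw : R)
  (Hdelta : 0 < delta < 1) (Hrc : 0 < rc) (Hru : 0 < ru) (Hrw : 0 < rw)
  (X : 'I_n -> 'M[R]_(d, T)) (q : 'I_n -> 'cV[R]_d)
  (HX : forall j, inX (X j)) (Hq : forall j, vnorm (q j) <= 1)
  (c0 : 'I_m -> R) (U0 : 'I_m -> 'cV[R]_d) (W0 : 'I_m -> 'M[R]_d)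
  (Hinit : sym_init c0 U0 W0)
  (HE : eventU delta U0) :
  forall (c : 'I_m -> R) (U : 'I_m -> 'cV[R]_d) (W : 'I_m -> 'M[R]_d),
    inOmega rc ru rw c0 U0 W0 c U W ->
    forall j : 'I_n,
      `|fnet sigma (X j) (q j) c U W - flin sigma (X j) (q j) c0 U0 W0 c U W|
      <= (Num.sqrt m%:R)^-1 *
         (L1m s1 d m delta ru * rc * Num.sqrt (rw ^+ 2 + ru ^+ 2)
          + L2m s1 s2 d m delta ru * (rw ^+ 2 + ru ^+ 2)).
Proof.
move=> c U W in_Omega j.
rewrite fnet_sub_flinE //.
have [m0|m_gt0] := posnP m; first by rewrite [X in X%:R]m0 sqrtr0 invr0 !mul0r normr0.
apply: norm_scaled_sum_le; rewrite ?invr_ge0 ?sqrtr_ge0 // => i.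
rewrite -[X in _ / X](@sqr_sqrtr _ m%:R) ?ler0n //.
have [dc_le dU_le dW_le] := in_Omega i.
set sm := Num.sqrt m%:R in dc_le dU_le dW_le *; set B := BUm d m delta ru.
have sm_gt0 : 0 < sm by rewrite sqrtr_gt0 ltr0n.
have seg_B t : 0 <= t <= 1 -> forall s,
    `|readout (X j) (U0 i) s + t * readout (X j) (U i - U0 i) s| <= B.
  move=> t01 s.
  exact: le_trans (norm_readout_segment_le (HX j) _ _ s t01) (lerD (HE i) dU_le).
have c0_1 : `|c0 i| = 1.
  by case: Hinit => c0_pm1 _; case: (c0_pm1 i) => ->; rewrite ?normrN normr1.
have N_le : Num.sqrt (vnorm (U i - U0 i) ^+ 2 + fnorm (W i - W0 i) ^+ 2)
    <= Num.sqrt (rw ^+ 2 + ru ^+ 2) / sm.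
  by rewrite addrC sqrt_sumsq_le_div ?sqrtr_ge0.
have B_ge0 : 0 <= B by rewrite !addr_ge0 ?sqrtr_ge0 ?divr_ge0 ?ltW.
apply: le_trans (neuron_error_le Hd1 Hd2 Hs1 Hs2 _ (sqrtr_ge0 _) (sqrtr_ge0 _) B_ge0
  (norm_readout_le (HX j) _) (fun s => norm_attn_logit_le (HX j) _ s (Hq j))
  seg_B c0_1 dc_le N_le) _.
rewrite le_eqVlt; apply/orP; left; apply/eqP.
rewrite /L1m /L2m -/B expr_div_n sqr_sqrtr ?addr_ge0 ?sqr_ge0 //.
by field; rewrite gt_eqF.
Qed.
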